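(* Let $\Gamma=(V,E)$ be a finite directed graph with $[n]\subseteq V$, let $w:E\to\mathbb{R}$ be edge weights with no directed cycle of negative total weight, and let $S_1\subset\dots\subset S_s$ be subsets of $V$ with $|S_j|=d_j$, $d_1<\dots<d_s$, such that for each $j$ there is some subset of $[n]$ with a linking onto $S_j$. For $I\in\binom{[n]}{d_j}$ let $\mu_j(I)$ be the minimum weight of a linking from $I$ onto $S_j$ ($\infty$ if none exists). Then $(\mu_1,\dots,\mu_s)$ is a valuated flag matroid of rank $(d_1,\dots,d_s)$.
   Context: A linking from $I$ onto $J$ ($|I|=|J|$) is a collection of $|I|$ pairwise vertex-disjoint directed paths (paths of length 0 allowed), each starting at a vertex of $I$ and ending at a vertex of $J$; its weight is the total weight of its edges. A valuated matroid of rank $d$ on $[n]$ is $\mu:\binom{[n]}{d}\to\mathbb{R}\cup\{\infty\}$, not identically $\infty$, such that for all $S\in\binom{[n]}{d-1}$, $T\in\binom{[n]}{d+1}$ the minimum of $\mu(S\cup t)+\mu(T\setminus t)$, $t\in T\setminus S$, is attained at least twice or is $\infty$. A valuated flag matroid of rank $(d_1,\dots,d_s)$ is a tuple of valuated matroids $\mu_j$ of rank $d_j$ such that for all $j<k$, $S\in\binom{[n]}{d_j-1}$, $T\in\binom{[n]}{d_k+1}$, the minimum of $\mu_j(S\cup t)+\mu_k(T\setminus t)$, $t\in T\setminus S$, is attained at least twice or is $\infty$. *)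

From HB Require Import structures.
From mathcomp Require Import all_boot all_order all_algebra.
From mathcomp Require Import boolp classical_sets reals constructive_ereal ereal.
Set Implicit Arguments. Unset Strict Implicit. Unset Printing Implicit Defensive.
Import Order.TTheory GRing.Theory Num.Theory.
Local Open Scope ring_scope.

Section Graph.
Variables (V E : finType) (src tgt : E -> V).

Fixpoint is_walk (x : V) (es : seq E) : bool :=
  if es is e :: es' then (src e == x) && is_walk (tgt e) es' else true.

Definition walk_verts (x : V) (es : seq E) : seq V := x :: map tgt es.

Definition walk_end (x : V) (es : seq E) : V := last x (map tgt es).

Definition is_path (x : V) (es : seq E) : bool :=
  is_walk x es && uniq (walk_verts x es).

Definition is_cycle (x : V) (es : seq E) : bool :=
  [&& es != [::], is_walk x es, walk_end x es == x & uniq (map tgt es)].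

Variable R : realType.
Variable w : E -> R.

Definition walk_weight (es : seq E) : R := \sum_(e <- es) w e.

Definition no_negative_cycle : Prop :=
  forall x es, is_cycle x es -> 0 <= walk_weight es.

Variables (n : nat) (iota : 'I_n -> V).

(* A linking from I (a subset of [n], embedded in V via iota) onto J:
   for each i in I a path starting at iota i and ending in J, these paths
   being pairwise vertex-disjoint, and |I| = |J|. *)
Definition is_linking (I : {set 'I_n}) (J : {set V}) (P : 'I_n -> seq E) : Prop :=
  [/\ #|I| = #|J|,
      forall i, i \in I -> is_path (iota i) (P i) && (walk_end (iota i) (P i) \in J)
    & forall i i', i \in I -> i' \in I -> i != i' ->
        [disjoint walk_verts (iota i) (P i) & walk_verts (iota i') (P i')]].

Definition linking_weight (I : {set 'I_n}) (P : 'I_n -> seq E) : R :=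
  \sum_(i in I) walk_weight (P i).

Definition has_linking (I : {set 'I_n}) (J : {set V}) : Prop :=
  exists P, is_linking I J P.

(* minimum weight of a linking from I onto J (+oo if there is none);
   the set of weights is finite, so the infimum is a minimum *)
Definition min_linking_weight (I : {set 'I_n}) (J : {set V}) : \bar R :=
  ereal_inf [set (linking_weight I P)%:E | P in [set P | is_linking I J P]].

End Graph.

Section Valuated.
Variables (R : realType) (n : nat).
Local Open Scope ereal_scope.

Definition min_twice_or_infty (A : {set 'I_n}) (f : 'I_n -> \bar R) : Prop :=
  (forall t, t \in A -> f t = +oo) \/
  exists t1 t2, [/\ t1 \in A, t2 \in A, t1 != t2, f t1 = f t2
                  & forall t, t \in A -> f t1 <= f t].

(* mu is only evaluated on d-subsets of [n] below *)
Definition valuated_matroid (d : nat) (mu : {set 'I_n} -> \bar R) : Prop :=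
  (exists I : {set 'I_n}, #|I| = d /\ mu I != +oo) /\
  forall S T : {set 'I_n}, #|S|.+1 = d -> #|T| = d.+1 ->
    min_twice_or_infty (T :\: S) (fun t => mu (t |: S) + mu (T :\ t)).

Definition valuated_flag_matroid (s : nat) (d : 'I_s -> nat)
    (mu : 'I_s -> {set 'I_n} -> \bar R) : Prop :=
  (forall j, valuated_matroid (d j) (mu j)) /\
  forall j k : 'I_s, (j < k)%N ->
  forall S T : {set 'I_n}, #|S|.+1 = d j -> #|T| = (d k).+1 ->
    min_twice_or_infty (T :\: S) (fun t => mu j (t |: S) + mu k (T :\ t)).

End Valuated.

From HB Require Import structures.
From mathcomp Require Import all_boot all_order all_algebra.
From mathcomp Require Import boolp reals constructive_ereal ereal.
From mathcomp Require Import lra.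
Set Implicit Arguments. Unset Strict Implicit. Unset Printing Implicit Defensive.
Import Order.TTheory GRing.Theory Num.Theory.

(* A linking from I onto J is encoded as a routing of the vertices outside J: each of them
   either forwards along one of its out-edges or stays put, so that the resulting hop map is
   a bijection from V \ J onto V \ iota(I). A linking yields a routing of the same weight.
   Conversely, following the hops from the sources yields a linking; the hops it does not use
   form cycles, so (measured with a potential, which exists as no cycle is negative) its
   weight is at most that of the routing. Hence mu(I, J) is the least weight of a routing.
   Routings of V \ J1 and V \ J2 with J1 <= J2 can be exchanged: from a source a of the first
   that is not a source of the second, alternately step back along the second hop map and
   forward along the first; the chain ends at a source b of the second that is not a source
   of the first, and swapping the two routings along the chain trades a for b in both source
   sets at no cost. Applied to optimal routings for mu_j(t1 + S) and mu_k(T - t1), where t1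
   minimises mu_j(t + S) + mu_k(T - t), this yields a second minimiser t2. *)

Lemma uniq_map_inj_in (T1 T2 : eqType) (f : T1 -> T2) (s : seq T1) :
  uniq (map f s) -> {in s &, injective f}.
Proof.
elim: s => //= a s IH /andP[fa_notin /IH inj_s] x y.
rewrite !inE => /predU1P[->|xs] /predU1P[->|ys] // fxy.
- by move: fa_notin; rewrite fxy map_f.
- by move: fa_notin; rewrite -fxy map_f.
- exact: inj_s.
Qed.

Section Walks.
Variables (V E : finType) (src tgt : E -> V).

Lemma walk_cat x p q : is_walk src tgt x (p ++ q) =
  is_walk src tgt x p && is_walk src tgt (walk_end tgt x p) q.
Proof. by elim: p x => [|e p IH] x //=; rewrite IH andbA. Qed.

Lemma walk_end_cat x p q :
  walk_end tgt x (p ++ q) = walk_end tgt (walk_end tgt x p) q.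
Proof. by rewrite /walk_end map_cat last_cat. Qed.

Lemma walk_verts_cat x p q :
  walk_verts tgt x (p ++ q) = walk_verts tgt x p ++ map tgt q.
Proof. by rewrite /walk_verts map_cat. Qed.

Lemma walk_end_rcons x p e : walk_end tgt x (rcons p e) = tgt e.
Proof. by rewrite /walk_end map_rcons last_rcons. Qed.

Lemma walk_rcons x p e : is_walk src tgt x (rcons p e) =
  is_walk src tgt x p && (src e == walk_end tgt x p).
Proof. by rewrite -cats1 walk_cat /= andbT. Qed.

Lemma walk_srcs x p :
  is_walk src tgt x p -> map src p = belast x (map tgt p).
Proof. by elim: p x => [|e p IH] x //= /andP[/eqP-> /IH->]. Qed.

Lemma walk_vertsE x p : is_walk src tgt x p ->
  walk_verts tgt x p = rcons (map src p) (walk_end tgt x p).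
Proof. by move=> /walk_srcs srcsE; rewrite srcsE -lastI. Qed.

Lemma walk_start_in_verts x p : x \in walk_verts tgt x p.
Proof. exact: mem_head. Qed.

Lemma walk_end_in_verts x p : walk_end tgt x p \in walk_verts tgt x p.
Proof. exact: mem_last. Qed.

Lemma walk_tgt_in_verts x p e : e \in p -> tgt e \in walk_verts tgt x p.
Proof. by move=> ep; rewrite inE map_f ?orbT. Qed.

Lemma walk_src_in_verts x p e :
  is_walk src tgt x p -> e \in p -> src e \in walk_verts tgt x p.
Proof. by move=> wp ep; rewrite walk_vertsE // mem_rcons inE map_f ?orbT. Qed.

Lemma walk_in_verts_split x p v : is_walk src tgt x p ->
  v \in walk_verts tgt x p -> v = walk_end tgt x p \/ v \in map src p.
Proof. by move=> wp; rewrite walk_vertsE // mem_rcons inE => /predU1P. Qed.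

Lemma walk_verts_split x p v : v \in walk_verts tgt x p ->
  exists p1 p2, p = p1 ++ p2 /\ walk_end tgt x p1 = v.
Proof.
elim: p x => [|e p IH] x v_in.
  by exists [::], [::]; move: v_in; rewrite inE => /eqP.
case/predU1P: v_in => [->|/IH[p1 [p2 [-> <-]]]]; first by exists [::], (e :: p).
by exists (e :: p1), p2.
Qed.

Lemma walk_weight_cat (R : realType) (w : E -> R) p q :
  (walk_weight w (p ++ q) = walk_weight w p + walk_weight w q)%R.
Proof. exact: big_cat. Qed.

Lemma walk_telescope (R : zmodType) (pi : V -> R) x p : is_walk src tgt x p ->
  (\sum_(e <- p) (pi (src e) - pi (tgt e)) = pi x - pi (walk_end tgt x p))%R.
Proof.
elim: p x => [|e p IH] x /=; first by rewrite big_nil subrr.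
by case/andP=> /eqP src_e /IH; rewrite big_cons src_e => ->; rewrite addrA subrK.
Qed.

Section Paths.
Variables (x : V) (p : seq E).
Hypothesis xp : is_path src tgt x p.

Lemma path_walk : is_walk src tgt x p.
Proof. by case/andP: xp. Qed.

Lemma path_uniq : uniq (walk_verts tgt x p).
Proof. by case/andP: xp. Qed.

Lemma path_srcs_uniq : uniq (map src p).
Proof. by have := path_uniq; rewrite walk_vertsE ?path_walk // rcons_uniq => /andP[]. Qed.

Lemma path_end_notin_srcs : walk_end tgt x p \notin map src p.
Proof. by have := path_uniq; rewrite walk_vertsE ?path_walk // rcons_uniq => /andP[]. Qed.

Lemma path_tgt_neq_start e : e \in p -> tgt e != x.
Proof.
by move=> ep; have /andP[+ _] := path_uniq; apply: contraNneq => <-; apply: map_f.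
Qed.

Lemma path_src_inj : {in p &, injective src}.
Proof. exact/uniq_map_inj_in/path_srcs_uniq. Qed.

Lemma path_tgt_inj : {in p &, injective tgt}.
Proof. by have /andP[_ ?] := path_uniq; apply: uniq_map_inj_in. Qed.

Lemma path_size : size p < #|V|.
Proof.
by have /card_uniqP := path_uniq; rewrite /= size_map => <-; apply: max_card.
Qed.

End Paths.

Lemma path_rcons x p e : is_path src tgt x p -> src e = walk_end tgt x p ->
  tgt e \notin walk_verts tgt x p -> is_path src tgt x (rcons p e).
Proof.
case/andP=> wp up src_e tgt_e.
by rewrite /is_path walk_rcons wp src_e eqxx /walk_verts map_rcons -rcons_cons rcons_uniq tgt_e.
Qed.

Lemma path_split_cycle x p1 p2 e : is_path src tgt x (p1 ++ p2) ->
  src e = walk_end tgt x (p1 ++ p2) -> walk_end tgt x p1 = tgt e ->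
  is_path src tgt x p1 /\ is_cycle src tgt (tgt e) (rcons p2 e).
Proof.
rewrite /is_path walk_cat walk_verts_cat cat_uniq => /and3P[/andP[w1 w2] u1 /andP[dis u2]].
rewrite walk_end_cat => src_e end1; split; first by rewrite w1 u1.
rewrite /is_cycle walk_rcons -end1 w2 src_e eqxx walk_end_rcons end1 eqxx.
rewrite map_rcons rcons_uniq u2 -size_eq0 size_rcons /= andbT.
by apply: contra dis => tgt2; apply/hasP; exists (tgt e); rewrite // -end1 walk_end_in_verts.
Qed.

End Walks.

Lemma traject_prefix (T : eqType) (g : T -> T) x i m : i <= m ->
  {subset traject g x i <= traject g x m}.
Proof. by move=> le_im u; rewrite -(take_traject _ _ le_im) => /mem_take. Qed.

Lemma map_traject (T : Type) (g : T -> T) x m :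
  map g (traject g x m) = traject g (g x) m.
Proof. by elim: m x => //= m IH x; rewrite IH. Qed.

Section InjectiveIterates.
Variables (T : finType) (D : {set T}) (g : T -> T).
Hypothesis g_inj : {in D &, injective g}.

Lemma iter_in_inj x y i j : x \notin g @: D -> y \notin g @: D ->
  {subset traject g x i <= D} -> {subset traject g y j <= D} ->
  iter i g x = iter j g y -> x = y /\ i = j.
Proof.
have last_in z k : {subset traject g z k.+1 <= D} -> iter k g z \in D.
  by apply; apply/trajectP; exists k.
move=> xD yD; elim: i j => [|i IH] [|j] /= sx sy; first by move->.
- by move=> xE; case/imsetP: xD; exists (iter j g y); rewrite ?last_in.
- by move=> yE; case/imsetP: yD; exists (iter i g x); rewrite ?last_in.
have prefix z k : {subset traject g z k.+1 <= D} -> {subset traject g z k <= D}.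
  by move=> sub u /(traject_prefix (leqnSn _))/sub.
move/g_inj => /(_ (last_in _ _ sx) (last_in _ _ sy)).
by case/(IH j (prefix _ _ sx) (prefix _ _ sy)) => -> ->.
Qed.

Lemma uniq_traject_in x m : x \notin g @: D -> {subset traject g x m <= D} ->
  uniq (traject g x m.+1).
Proof.
move=> xD sub; rewrite looping_uniq; apply/negP => /trajectP[i lt_im iterE].
have subi : {subset traject g x i <= D}.
  by move=> u /(traject_prefix (ltnW lt_im))/sub.
by have [_ eq_mi] := iter_in_inj xD xD sub subi iterE; rewrite eq_mi ltnn in lt_im.
Qed.

Definition exit_time x := find [pred v | v \notin D] (traject g x #|T|.+1).

Lemma exit_timeP x : x \notin g @: D ->
  iter (exit_time x) g x \notin D /\ {subset traject g x (exit_time x) <= D}.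
Proof.
move=> xD; have exits : has [pred v | v \notin D] (traject g x #|T|.+1).
  apply/negPn/negP; rewrite -all_predC => /allP /= sub.
  have sub' : {subset traject g x #|T| <= D}.
    by move=> u /(traject_prefix (leqnSn _))/sub; apply: negbNE.
  have /card_uniqP card_eq := uniq_traject_in xD sub'.
  by have := max_card (mem (traject g x #|T|.+1)); rewrite card_eq size_traject ltnn.
have lt_exit : exit_time x < #|T|.+1 by rewrite -[X in _ < X](size_traject g x) -has_find.
split; first by have := nth_find x exits; rewrite nth_traject.
move=> u /trajectP[i lt_i ->]; apply/negPn.
by have := before_find x lt_i; rewrite nth_traject ?(ltn_trans lt_i) //= => ->.
Qed.

End InjectiveIterates.

Local Open Scope ring_scope.

Section Routings.
Variables (V E : finType) (src tgt : E -> V).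

Definition hop (f : V -> option E) (v : V) : V := oapp tgt v (f v).

Definition routing (D U : {set V}) (f : V -> option E) :=
  [/\ {in D, forall v, oapp (fun e => src e == v) true (f v)},
      {in D &, injective (hop f)} & hop f @: D = ~: U].

Definition routing_weight (R : nmodType) (w : E -> R) (D : {set V})
    (f : V -> option E) : R :=
  \sum_(v in D) oapp w 0 (f v).

Definition patch (L : {set V}) (f' f : V -> option E) (v : V) :=
  if v \in L then f' v else f v.

Lemma hop_patch L f' f v :
  hop (patch L f' f) v = if v \in L then hop f' v else hop f v.
Proof. by rewrite /hop /patch; case: ifP. Qed.

Section Patch.
Variables (D D' U U' L : {set V}) (f f' : V -> option E) (a b : V).
Hypotheses (f_routing : routing D U f) (f'_routing : routing D' U' f').
Hypotheses (LD : L \subset D) (LD' : L \subset D') (aU : a \in U) (bU' : b \in U').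
Hypothesis chainE : a |: hop f @: L = b |: hop f' @: L.

Let hop_f_neq v : v \in D -> hop f v != a.
Proof.
case: f_routing => _ _ f_im vD; apply: contraTneq aU => <-.
by rewrite -in_setC -f_im imset_f.
Qed.

Let hop_f'_neq v : v \in D' -> hop f' v != b.
Proof.
case: f'_routing => _ _ f'_im vD; apply: contraTneq bU' => <-.
by rewrite -in_setC -f'_im imset_f.
Qed.

Lemma hop_patch_inj : {in D &, injective (hop (patch L f' f))}.
Proof.
case: f_routing f'_routing => _ f_inj _ [_ f'_inj _].
have cross v v' : v \in L -> v' \in D -> v' \notin L -> hop f' v != hop f v'.
  move=> vL v'D v'L; apply/eqP => hopE.
  have : hop f v' \in a |: hop f @: L by rewrite -hopE chainE setU1r ?imset_f.
  case/setU1P => [/eqP|/imsetP[l lL /f_inj]]; first by rewrite (negbTE (hop_f_neq v'D)).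
  by move=> /(_ v'D (subsetP LD l lL)) v'E; rewrite v'E lL in v'L.
move=> v v' vD v'D; rewrite !hop_patch.
case: ifP => vL; case: ifP => v'L.
- exact: f'_inj (subsetP LD' v vL) (subsetP LD' v' v'L).
- by move/eqP; rewrite (negbTE (cross _ _ vL v'D (negbT v'L))).
- by move/esym/eqP; rewrite (negbTE (cross _ _ v'L vD (negbT vL))).
- exact: f_inj.
Qed.

Lemma hop_patch_image : hop (patch L f' f) @: D = ~: (b |: (U :\ a)).
Proof.
case: f_routing => _ f_inj f_im.
apply/setP => u; rewrite in_setC in_setU1 in_setD1 negb_or negb_and negbK.
rewrite -in_setC -f_im; apply/imsetP/andP => [[v vD ->]|[ub]].
  rewrite hop_patch; case: ifP => vL.
    split; first exact/hop_f'_neq/(subsetP LD').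
    have : hop f' v \in a |: hop f @: L by rewrite chainE setU1r ?imset_f.
    by case/setU1P => [->|/imsetP[l lL ->]]; rewrite ?eqxx ?imset_f ?orbT ?(subsetP LD).
  split; last by rewrite imset_f ?orbT.
  apply/eqP => hopE; have : b \in a |: hop f @: L by rewrite chainE setU11.
  rewrite -hopE => /setU1P[/eqP|/imsetP[l lL /f_inj]].
    by rewrite (negbTE (hop_f_neq vD)).
  by move=> /(_ vD (subsetP LD l lL)) vE; rewrite vE lL in vL.
case/predU1P => [uE|/imsetP[v vD uE]]; subst u.
  have : a \in b |: hop f' @: L by rewrite -chainE setU11.
  case/setU1P => [abE|/imsetP[l lL ->]]; first by rewrite abE eqxx in ub.
  by exists l; rewrite ?(subsetP LD) ?hop_patch ?lL.
case vL: (v \in L); last by exists v; rewrite ?hop_patch ?vL.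
have : hop f v \in b |: hop f' @: L by rewrite -chainE setU1r ?imset_f.
case/setU1P => [hopE|/imsetP[l lL ->]]; first by rewrite hopE eqxx in ub.
by exists l; rewrite ?(subsetP LD) ?hop_patch ?lL.
Qed.

Lemma routing_patch : routing D (b |: (U :\ a)) (patch L f' f).
Proof.
split; [|exact: hop_patch_inj|exact: hop_patch_image].
case: f_routing f'_routing => f_src _ _ [f'_src _ _] v vD.
by rewrite /patch; case: ifP => [/(subsetP LD')|_]; [apply: f'_src | apply: f_src].
Qed.

End Patch.

Lemma routing_weight_patch (R : nmodType) (w : E -> R) (D D' L : {set V}) f f' :
  L \subset D -> L \subset D' ->
  routing_weight w D (patch L f' f) + routing_weight w D' (patch L f f') =
  routing_weight w D f + routing_weight w D' f'.
Proof.
have splitE (A : {set V}) g : L \subset A -> \sum_(v in A) oapp w 0 (g v) =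
    \sum_(v in L) oapp w 0 (g v) + \sum_(v in A :\: L) oapp w 0 (g v).
  by move=> LA; rewrite (big_setID L) (setIidPr LA).
have patchE (A : {set V}) g g' : L \subset A -> \sum_(v in A) oapp w 0 (patch L g g' v) =
    \sum_(v in L) oapp w 0 (g v) + \sum_(v in A :\: L) oapp w 0 (g' v).
  move=> /splitE ->; congr (_ + _); apply: eq_bigr => v; rewrite /patch.
    by move->.
  by case/setDP=> _ /negbTE->.
move=> LD LD'; rewrite /routing_weight (patchE D) // (patchE D') //.
by rewrite (splitE D) // (splitE D') // addrACA [RHS]addrACA [X in X + _ = _]addrC.
Qed.

Lemma routing_alternating_chain (D1 D2 U1 U2 : {set V}) f1 f2 a : D2 \subset D1 ->
  routing D1 U1 f1 -> routing D2 U2 f2 -> a \in U1 -> a \notin U2 ->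
  exists (L : {set V}) b, [/\ L \subset D2, b \in U2 & a |: hop f1 @: L = b |: hop f2 @: L].
Proof.
move=> /subsetP D21 [_ f1_inj f1_im] [_ f2_inj f2_im] aU1 aU2.
pose back u := odflt u [pick v in D2 | hop f2 v == u].
have backP u : u \in ~: U2 -> back u \in D2 /\ hop f2 (back u) = u.
  rewrite -f2_im => /imsetP[v vD ->]; rewrite /back.
  by case: pickP => [v' /andP[v'D /eqP] //|/(_ v)]; rewrite vD eqxx.
pose h u := hop f1 (back u).
have h_inj : {in ~: U2 &, injective h}.
  move=> u u' /backP[uD uE] /backP[u'D u'E] /f1_inj hE.
  by rewrite -uE -u'E hE ?D21.
have a_start : a \notin h @: ~: U2.
  apply/imsetP => -[u /backP[uD _] aE].
  have : a \in ~: U1 by rewrite -f1_im aE /h imset_f ?D21.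
  by rewrite inE aU1.
have [exit_out prefix] := exit_timeP h_inj a_start.
set m := exit_time _ _ _ in exit_out prefix; set C := traject h a m in prefix.
exists (back @: [set u in C]), (iter m h a); split.
- by apply/subsetP => _ /imsetP[u + ->]; rewrite inE => /prefix/backP[].
- by move: exit_out; rewrite inE negbK.
have hop2 : hop f2 @: (back @: [set u in C]) = [set u in C].
  rewrite -imset_comp -[RHS]imset_id; apply: eq_in_imset => u.
  by rewrite inE => /prefix/backP[].
have hop1 : hop f1 @: (back @: [set u in C]) = [set u in map h C].
  rewrite -imset_comp; apply/setP => u; rewrite inE.
  by apply/imsetP/mapP => -[v]; rewrite ?inE => vC ->; exists v; rewrite ?inE.
have chain : a :: map h C = rcons C (iter m h a).
  by rewrite map_traject -trajectS trajectSr.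
by rewrite hop1 hop2; apply/setP => u; rewrite !in_setU1 !inE -!in_cons chain mem_rcons.
Qed.

Lemma routing_exchange (R : nmodType) (w : E -> R) (D1 D2 U1 U2 : {set V}) f1 f2 a :
  D2 \subset D1 -> routing D1 U1 f1 -> routing D2 U2 f2 ->
  a \in U1 -> a \notin U2 ->
  exists b g1 g2, [/\ b \in U2, b \notin U1, routing D1 (b |: (U1 :\ a)) g1,
    routing D2 (a |: (U2 :\ b)) g2 &
    routing_weight w D1 g1 + routing_weight w D2 g2 =
    routing_weight w D1 f1 + routing_weight w D2 f2].
Proof.
move=> D21 r1 r2 aU1 aU2.
have [L [b [LD2 bU2 chainE]]] := routing_alternating_chain D21 r1 r2 aU1 aU2.
have LD1 : L \subset D1 := subset_trans LD2 D21.
exists b, (patch L f2 f1), (patch L f1 f2); split => //.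
- have : b \in a |: hop f1 @: L by rewrite chainE setU11.
  case/setU1P => [baE|/imsetP[v vL ->]]; first by rewrite -baE bU2 in aU2.
  by case: r1 => _ _ f1_im; rewrite -in_setC -f1_im imset_f // (subsetP LD1).
- exact: routing_patch r1 r2 LD1 LD2 aU1 bU2 chainE.
- exact: routing_patch r2 r1 LD2 LD1 bU2 aU1 (esym chainE).
- exact: routing_weight_patch.
Qed.

Lemma walk_pmap_traject (f : V -> option E) x m :
  {in traject (hop f) x m, forall v, oapp (fun e => src e == v) false (f v)} ->
  is_walk src tgt x (pmap f (traject (hop f) x m)) /\
  walk_verts tgt x (pmap f (traject (hop f) x m)) = traject (hop f) x m.+1.
Proof.
elim: m x => [|m IH] x out //=.
have := out x (mem_head _ _); case fx: (f x) => [e|] //= /eqP srcE.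
have hopx : hop f x = tgt e by rewrite /hop fx.
case: (IH (tgt e)) => [v vm|walk_rest vertsE]; first by apply: out; rewrite /= hopx inE vm orbT.
rewrite hopx /= srcE eqxx walk_rest; split => //; congr (_ :: _); exact: vertsE.
Qed.

End Routings.

Section Linkings.
Variables (V E : finType) (src tgt : E -> V) (n : nat) (iota : 'I_n -> V).
Local Notation hop := (hop tgt).

Definition linking_srcs (I : {set 'I_n}) (P : 'I_n -> seq E) : {set V} :=
  [set v | [exists i in I, v \in map src (P i)]].

Variables (I : {set 'I_n}) (J : {set V}) (P : 'I_n -> seq E).
Hypothesis PIJ : is_linking src tgt iota I J P.
Local Notation verts i := (walk_verts tgt (iota i) (P i)).
Local Notation endpoint i := (walk_end tgt (iota i) (P i)).

Lemma linking_path i : i \in I -> is_path src tgt (iota i) (P i).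
Proof. by case: PIJ => _ + _ iI => /(_ i iI) /andP[]. Qed.

Lemma linking_endpoint i : i \in I -> endpoint i \in J.
Proof. by case: PIJ => _ + _ iI => /(_ i iI) /andP[]. Qed.

Lemma linking_same_path i i' v : i \in I -> i' \in I ->
  v \in verts i -> v \in verts i' -> i = i'.
Proof.
case: PIJ => _ _ disj iI i'I vi vi'; case: (eqVneq i i') => // ii'.
by rewrite (disjointFr (disj i i' iI i'I ii') vi) in vi'.
Qed.

Lemma linking_src_in_verts i v : i \in I -> v \in map src (P i) -> v \in verts i.
Proof. by move=> iI /mapP[e ep ->]; apply/walk_src_in_verts/ep/path_walk/linking_path. Qed.

Lemma linking_endpoint_inj : {in I &, injective (fun i => endpoint i)}.
Proof.
move=> i i' iI i'I /= endE.
by apply: (linking_same_path iI i'I (walk_end_in_verts _ _ _)); rewrite endE walk_end_in_verts.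
Qed.

Lemma linking_endpoints : [set endpoint i | i in I] = J.
Proof.
case: PIJ => card_IJ _ _; apply/eqP.
rewrite eqEcard card_in_imset ?card_IJ ?leqnn ?andbT; last exact: linking_endpoint_inj.
by apply/subsetP => _ /imsetP[i iI ->]; apply: linking_endpoint.
Qed.

Lemma linking_interior i v : i \in I -> v \in verts i -> v \notin J ->
  v \in map src (P i).
Proof.
move=> iI /(walk_in_verts_split (path_walk (linking_path iI))) [->|//].
by rewrite linking_endpoint.
Qed.

Lemma linking_src_notin i e : i \in I -> e \in P i -> src e \notin J.
Proof.
move=> iI ep; apply/negP => srcJ.
have srci := walk_src_in_verts (path_walk (linking_path iI)) ep.
have /imsetP[j jI srcE] : src e \in [set endpoint j | j in I] by rewrite linking_endpoints.
have ji : j = i by apply: linking_same_path jI iI _ srci; rewrite srcE walk_end_in_verts.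
by subst j; case/negP: (path_end_notin_srcs (linking_path iI)); rewrite -srcE map_f.
Qed.

Lemma sum_linking_srcs (M : nmodType) (F : V -> M) :
  \sum_(i in I) \sum_(e <- P i) F (src e) = \sum_(v in linking_srcs I P) F v.
Proof.
have inner i : i \in I -> \sum_(e <- P i) F (src e) =
    \sum_v (if v \in map src (P i) then F v else 0).
  move=> iI; rewrite -(big_map src xpredT) big_uniq ?big_mkcond //.
  exact/path_srcs_uniq/linking_path.
rewrite (eq_bigr _ inner) exchange_big [RHS]big_mkcond; apply: eq_bigr => v _.
rewrite inE; case: existsP => [[i /andP[iI vi]]|none].
  rewrite (bigD1 i iI) vi big1 /= => [|i' /andP[i'I i'i]]; first by rewrite addr0.
  case: ifP => // vi'; case/eqP: i'i.
  exact: linking_same_path i'I iI (linking_src_in_verts i'I vi') (linking_src_in_verts iI vi).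
by rewrite big1 // => i iI; case: ifP => // vi; case: none; exists i; rewrite iI.
Qed.

Lemma linking_telescope (R : zmodType) (pi : V -> R) : injective iota ->
  \sum_(i in I) \sum_(e <- P i) (pi (src e) - pi (tgt e)) =
  \sum_(u in iota @: I) pi u - \sum_(u in J) pi u.
Proof.
move=> iota_inj; rewrite -linking_endpoints (big_imset _ linking_endpoint_inj).
rewrite (big_imset _ (in2W iota_inj)) -sumrB; apply: eq_bigr => i iI.
exact/walk_telescope/path_walk/linking_path.
Qed.

Definition linking_route (v : V) : option E :=
  [pick e | (src e == v) && [exists i in I, e \in P i]].

Lemma linking_routeP i e : i \in I -> e \in P i -> linking_route (src e) = Some e.
Proof.
move=> iI ep; rewrite /linking_route.
case: pickP => [e' /andP[/eqP srcE /existsP[i' /andP[i'I e'p]]]|]; last first.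
  by move/(_ e); rewrite eqxx /=; case/existsP; exists i; rewrite iI.
have srci := walk_src_in_verts (path_walk (linking_path iI)) ep.
have srci' := walk_src_in_verts (path_walk (linking_path i'I)) e'p.
rewrite -srcE in srci; have ii' := linking_same_path iI i'I srci srci'; subst i'.
by congr Some; apply: (path_src_inj (linking_path iI)).
Qed.

Lemma linking_routeS v e : linking_route v = Some e ->
  src e = v /\ exists2 i, i \in I & e \in P i.
Proof.
rewrite /linking_route; case: pickP => // e' /andP[/eqP srcE /existsP[i /andP[iI ep]]] [<-].
by split => //; exists i.
Qed.

Lemma linking_route_neq_None i v : i \in I -> v \in verts i -> v \notin J ->
  linking_route v != None.
Proof.
move=> iI vi vJ; have /mapP[e ep ->] := linking_interior iI vi vJ.
by rewrite (linking_routeP iI ep).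
Qed.

Lemma hop_linking_route_inj : {in ~: J &, injective (hop linking_route)}.
Proof.
move=> v v'; rewrite !inE /hop => vJ v'J.
case routeE: (linking_route v) => [e|]; case routeE': (linking_route v') => [e'|] //=.
- have [<- [i iI ep]] := linking_routeS routeE.
  have [<- [i' i'I e'p]] := linking_routeS routeE' => tgtE.
  have e'i : tgt e' \in verts i by rewrite -tgtE walk_tgt_in_verts.
  have ii' := linking_same_path iI i'I e'i (walk_tgt_in_verts _ _ e'p); subst i'.
  by rewrite (path_tgt_inj (linking_path iI) ep e'p tgtE).
- have [_ [i iI ep]] := linking_routeS routeE => tgtE.
  have v'i : v' \in verts i by rewrite -tgtE walk_tgt_in_verts.
  by have := linking_route_neq_None iI v'i v'J; rewrite routeE'.
- have [_ [i iI ep]] := linking_routeS routeE' => tgtE.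
  have vi : v \in verts i by rewrite tgtE walk_tgt_in_verts.
  by have := linking_route_neq_None iI vi vJ; rewrite routeE.
Qed.

Lemma hop_linking_route_image : hop linking_route @: (~: J) = ~: (iota @: I).
Proof.
apply/setP => u; rewrite in_setC; apply/imsetP/idP => [[v + ->]|u_out].
  rewrite inE => vJ; apply/imsetP => -[i iI]; rewrite /hop.
  case routeE: (linking_route v) => [e|] /= hopE.
    have [_ [i' i'I ep]] := linking_routeS routeE.
    have ii' : i' = i.
      apply: linking_same_path i'I iI (walk_tgt_in_verts _ _ ep) _.
      by rewrite hopE walk_start_in_verts.
    by subst i'; case/eqP: (path_tgt_neq_start (linking_path iI) ep).
  have vi : v \in verts i by rewrite hopE walk_start_in_verts.
  by have := linking_route_neq_None iI vi vJ; rewrite routeE.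
case: (boolP [exists i in I, u \in verts i]) => [/existsP[i /andP[iI]]|off].
  case/predU1P => [uE|/mapP[e ep ->]]; first by rewrite uE imset_f in u_out.
  exists (src e); first by rewrite inE (linking_src_notin iI ep).
  by rewrite /hop (linking_routeP iI ep).
exists u; rewrite ?inE /hop.
  apply/negP => uJ; have /imsetP[i iI uE] : u \in [set endpoint i | i in I].
    by rewrite linking_endpoints.
  by case/existsP: off; exists i; rewrite iI uE walk_end_in_verts.
case routeE: (linking_route u) => [e|] //=; have [srcE [i iI ep]] := linking_routeS routeE.
case/existsP: off; exists i.
by rewrite iI -srcE (walk_src_in_verts (path_walk (linking_path iI))).
Qed.

Lemma routing_linking_route : routing src tgt (~: J) (iota @: I) linking_route.
Proof.
split; [|exact: hop_linking_route_inj|exact: hop_linking_route_image].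
move=> v _; case routeE: (linking_route v) => [e|] //=.
by case: (linking_routeS routeE) => ->.
Qed.

Lemma routing_weight_linking_route (R : realType) (w : E -> R) :
  routing_weight w (~: J) linking_route = linking_weight w I P.
Proof.
have srcs_out : linking_srcs I P \subset ~: J.
  apply/subsetP => v; rewrite !inE => /existsP[i /andP[iI /mapP[e ep ->]]].
  exact: linking_src_notin iI ep.
rewrite /routing_weight (big_setID (linking_srcs I P)) (setIidPr srcs_out) /=.
rewrite [X in _ + X]big1 ?addr0 => [|v /setDP[_ vsrcs]]; last first.
  case routeE: (linking_route v) => [e|] //=; have [srcE [i iI ep]] := linking_routeS routeE.
  by case/negP: vsrcs; rewrite inE -srcE; apply/existsP; exists i; rewrite iI map_f.
rewrite -sum_linking_srcs; apply: eq_bigr => i iI; apply: eq_big_seq => e ep.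
by rewrite (linking_routeP iI ep).
Qed.

End Linkings.

Section Potential.
Variables (V E : finType) (src tgt : E -> V) (R : realType) (w : E -> R).
Hypothesis w_cycles : no_negative_cycle src tgt w.
(* Paths have fewer than #|V| edges, so they range over a finite type on which their weight
   can be minimised. *)
Local Notation short_seq := {k : 'I_#|V| & k.-tuple E}.

Lemma path_as_tuple x p : is_path src tgt x p ->
  exists t : short_seq, tagged t = p :> seq E.
Proof.
move=> xp; pose k : 'I_#|V| := Ordinal (path_size xp).
by exists (@Tagged _ k (fun k : 'I_#|V| => k.-tuple E) (in_tuple p)).
Qed.

Lemma shortest_path_to v : exists c : V * seq E,
  [/\ is_path src tgt c.1 c.2, walk_end tgt c.1 c.2 = v &
      forall x p, is_path src tgt x p -> walk_end tgt x p = v ->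
        walk_weight w c.2 <= walk_weight w p].
Proof.
pose ends_at_v (c : V * short_seq) :=
  is_path src tgt c.1 (tagged c.2) && (walk_end tgt c.1 (tagged c.2) == v).
have [t0 t0E] := path_as_tuple (x := v) (p := [::]) (isT : is_path src tgt v [::]).
have ok0 : ends_at_v (v, t0) by rewrite /ends_at_v /= t0E /walk_end /= eqxx.
case: (arg_minP (fun c : V * short_seq => walk_weight w (tagged c.2)) ok0).
move=> c /andP[cp /eqP cv] c_min.
exists (c.1, tval (tagged c.2)); split => // x p xp pv.
have [t tE] := path_as_tuple xp.
by have := c_min (x, t); rewrite /ends_at_v /= tE xp pv eqxx => /(_ isT).
Qed.

Lemma no_negative_cycle_potential :
  exists pi : V -> R, forall e, pi (tgt e) <= pi (src e) + w e.
Proof.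
have [c cP] := choice shortest_path_to.
exists (fun v => walk_weight w (c v).2) => e /=; have [_ _ c_min] := cP (tgt e).
case: (c (src e)) (cP (src e)) => x p /= [xp xend _].
case: (boolP (tgt e \in walk_verts tgt x p)) => [|tgt_out].
  case/walk_verts_split => p1 [p2 [pE end1]]; subst p.
  have [p1_path cyc] := path_split_cycle xp (esym xend) end1.
  have := w_cycles cyc; rewrite -cats1 !walk_weight_cat /walk_weight big_seq1.
  by have := c_min _ _ p1_path end1; rewrite /walk_weight; lra.
have := c_min _ _ (path_rcons xp (esym xend) tgt_out) (walk_end_rcons _ _ _ _).
by rewrite -cats1 walk_weight_cat /walk_weight big_seq1.
Qed.

End Potential.

Lemma sum_setC (M : zmodType) (T : finType) (A : {set T}) (F : T -> M) :
  \sum_(x in ~: A) F x = \sum_x F x - \sum_(x in A) F x.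
Proof.
rewrite [X in _ = X - _](bigID [in A]) /= addrC addrK.
by apply: eq_bigl => x; rewrite inE.
Qed.

Section RoutedLinking.
Variables (V E : finType) (src tgt : E -> V) (n : nat) (iota : 'I_n -> V).
Hypothesis iota_inj : injective iota.
Variables (I : {set 'I_n}) (J : {set V}) (f : V -> option E).
Hypothesis f_routing : routing src tgt (~: J) (iota @: I) f.
Local Notation g := (hop tgt f).
Local Notation exit x := (exit_time (~: J) g x).

Definition routed_path (x : V) : seq E := pmap f (traject g x (exit x)).

Lemma hop_routing_inj : {in ~: J &, injective g}.
Proof. by case: f_routing. Qed.

Lemma source_notin_hop i : i \in I -> iota i \notin g @: ~: J.
Proof. by case: f_routing => _ _ -> iI; rewrite inE negbK imset_f. Qed.

Lemma routed_prefix i : i \in I ->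
  iter (exit (iota i)) g (iota i) \in J /\ {subset traject g (iota i) (exit (iota i)) <= ~: J}.
Proof.
move=> iI; have [out prefix] := exit_timeP hop_routing_inj (source_notin_hop iI).
by split => //; move: out; rewrite inE negbK.
Qed.

Lemma routed_prefix_moves i : i \in I ->
  {in traject g (iota i) (exit (iota i)), forall v, oapp (fun e => src e == v) false (f v)}.
Proof.
move=> iI v vm; have [_ prefix] := routed_prefix iI.
case: f_routing => f_src _ _; have := f_src v (prefix v vm).
case fv: (f v) => [e|] //= _; have /trajectP[t lt_t vE] := vm.
have stuck : iter t.+1 g (iota i) = iter t g (iota i) by rewrite iterS -vE /hop fv.
have sub k : (k <= exit (iota i))%N -> {subset traject g (iota i) k <= ~: J}.
  by move=> le_k u /(traject_prefix le_k)/prefix.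
have [_ /eqP] := iter_in_inj hop_routing_inj (source_notin_hop iI) (source_notin_hop iI)
  (sub _ lt_t) (sub _ (ltnW lt_t)) stuck.
by rewrite (gtn_eqF (ltnSn t)).
Qed.

Lemma routed_pathP i : i \in I ->
  [/\ is_path src tgt (iota i) (routed_path (iota i)),
      walk_verts tgt (iota i) (routed_path (iota i)) = traject g (iota i) (exit (iota i)).+1
    & walk_end tgt (iota i) (routed_path (iota i)) \in J].
Proof.
move=> iI; have [endJ prefix] := routed_prefix iI.
have [walk vertsE] := walk_pmap_traject (routed_prefix_moves iI).
have tgtsE : map tgt (routed_path (iota i)) = traject g (g (iota i)) (exit (iota i)).
  by case: vertsE.
split => //; last by rewrite /walk_end tgtsE last_traject.
by rewrite /is_path walk vertsE (uniq_traject_in hop_routing_inj (source_notin_hop iI) prefix).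
Qed.

Lemma routed_path_edges i e : i \in I -> e \in routed_path (iota i) ->
  f (src e) = Some e /\ src e \notin J.
Proof.
move=> iI; rewrite mem_pmap => /mapP[v vm fv].
have [_ prefix] := routed_prefix iI; have := routed_prefix_moves iI vm.
by rewrite -fv /= => /eqP srcE; rewrite srcE fv; have := prefix v vm; rewrite inE.
Qed.

Lemma routed_linking :
  is_linking src tgt iota I J (fun i => routed_path (iota i)).
Proof.
split.
- case: f_routing => _ g_inj g_im.
  move: (cardsC J) (cardsC (iota @: I)).
  rewrite -(card_in_imset g_inj) g_im (card_imset _ iota_inj) => cardJ cardI.
  by apply/eqP; rewrite -(eqn_add2r #|~: (iota @: I)|) cardI cardJ.
- by move=> i iI; have [-> _ ->] := routed_pathP iI.
move=> i i' iI i'I ii'; have [_ vertsE _] := routed_pathP iI.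
have [_ vertsE' _] := routed_pathP i'I; rewrite disjoint_has vertsE vertsE'.
apply/hasPn => _ /trajectP[a lt_a ->]; apply/negP => /trajectP[b lt_b iterE].
have sub j k : j \in I -> (k <= exit (iota j))%N -> {subset traject g (iota j) k <= ~: J}.
  by move=> jI le_k u' /(traject_prefix le_k); case: (routed_prefix jI) => _; apply.
have [/iota_inj eq_ii' _] := iter_in_inj hop_routing_inj
  (source_notin_hop iI) (source_notin_hop i'I) (sub _ _ iI lt_a) (sub _ _ i'I lt_b) iterE.
by rewrite eq_ii' eqxx in ii'.
Qed.

Lemma routed_linking_weight (R : realType) (w : E -> R) : no_negative_cycle src tgt w ->
  linking_weight w I (fun i => routed_path (iota i)) <= routing_weight w (~: J) f.
Proof.
move=> w_cycles; have [pi pi_tri] := no_negative_cycle_potential w_cycles.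
set P := fun i => routed_path (iota i).
(* The reduced weight of the hop at v: nonnegative, and telescoping along paths. *)
pose F v := oapp w 0 (f v) + (pi v - pi (g v)).
have F_ge0 v : v \in ~: J -> 0 <= F v.
  case: f_routing => f_src _ _ vJ; have := f_src v vJ; rewrite /F /hop.
  case: (f v) => [e /eqP srcE|_] /=; last by rewrite subrr addr0.
  by have := pi_tri e; rewrite srcE; lra.
have paths_sum : \sum_(i in I) \sum_(e <- P i) F (src e) =
    linking_weight w I P + (\sum_(u in iota @: I) pi u - \sum_(u in J) pi u).
  rewrite -(linking_telescope routed_linking) // -big_split; apply: eq_bigr => i iI.
  rewrite -big_split; apply: eq_big_seq => e ep /=.
  by have [fe _] := routed_path_edges iI ep; rewrite /F /hop fe.
have all_sum : \sum_(v in ~: J) F v =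
    routing_weight w (~: J) f + (\sum_(v in ~: J) pi v - \sum_(u in ~: (iota @: I)) pi u).
  by case: f_routing => _ g_inj <-; rewrite big_imset //= -sumrB -big_split.
have srcs_out : linking_srcs src I P \subset ~: J.
  apply/subsetP => v; rewrite inE => /existsP[i /andP[iI /mapP[e ep ->]]].
  by rewrite inE; case: (routed_path_edges iI ep).
have : \sum_(v in linking_srcs src I P) F v <= \sum_(v in ~: J) F v.
  rewrite [leRHS](big_setID (linking_srcs src I P)) (setIidPr srcs_out) lerDl.
  by apply: sumr_ge0 => v /setDP[vJ _]; apply: F_ge0.
rewrite -(sum_linking_srcs routed_linking) paths_sum all_sum !sum_setC; lra.
Qed.

End RoutedLinking.

Lemma imsetD1 (aT rT : finType) (f : aT -> rT) (A : {set aT}) a :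
  injective f -> f @: (A :\ a) = f @: A :\ f a.
Proof.
move=> f_inj; apply/setP => u; rewrite in_setD1.
apply/imsetP/andP => [[x /setD1P[xa xA] ->]|[ua /imsetP[x xA uE]]].
  by rewrite (inj_eq f_inj) xa imset_f.
by exists x; rewrite // in_setD1 xA andbT -(inj_eq f_inj) -uE.
Qed.

Lemma imsetU1D1 (aT rT : finType) (f : aT -> rT) (A : {set aT}) a b :
  injective f -> a \notin A -> f b |: (f @: (a |: A) :\ f a) = f @: (b |: A).
Proof. by move=> f_inj aA; rewrite -(imsetD1 _ _ f_inj) setU1K // imsetU1. Qed.

Lemma imsetD1U1 (aT rT : finType) (f : aT -> rT) (A : {set aT}) a b :
  injective f -> a \in A -> a != b -> f a |: (f @: (A :\ a) :\ f b) = f @: (A :\ b).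
Proof.
move=> f_inj aA ab; have -> : A :\ b = a |: ((A :\ a) :\ b).
  apply/setP => x; rewrite !inE.
  by case: (eqVneq x a) => [->|_] //=; rewrite ab aA.
by rewrite imsetU1 (imsetD1 (A :\ a) b f_inj).
Qed.

Section MinLinkingWeight.
Variables (V E : finType) (src tgt : E -> V) (n : nat) (iota : 'I_n -> V).
Variables (R : realType) (w : E -> R).
Hypotheses (iota_inj : injective iota) (w_cycles : no_negative_cycle src tgt w).
Implicit Types (I : {set 'I_n}) (J : {set V}) (f : V -> option E).
Local Notation mu I J := (min_linking_weight src tgt w iota I J).
Local Notation routing I J := (routing src tgt (~: J) (iota @: I)).
Local Notation rweight J f := (routing_weight w (~: J) f).
Local Open Scope ereal_scope.

Lemma min_linking_weight_le_linking I J P :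
  is_linking src tgt iota I J P -> mu I J <= (linking_weight w I P)%:E.
Proof. by move=> PIJ; apply: ereal_inf_lbound; exists P. Qed.

Lemma min_linking_weight_le_routing I J f : routing I J f -> mu I J <= (rweight J f)%:E.
Proof.
move=> fr; apply: le_trans (min_linking_weight_le_linking (routed_linking iota_inj fr)) _.
rewrite lee_fin; exact (routed_linking_weight iota_inj fr w_cycles).
Qed.

Lemma min_linking_weight_routing I J : mu I J != +oo ->
  exists2 f, routing I J f & mu I J = (rweight J f)%:E.
Proof.
move=> mu_fin; have [Q QIJ] : has_linking src tgt iota I J.
  case: (pselect (has_linking src tgt iota I J)) => // none.
  case/negP: mu_fin; rewrite eq_le leey /=.
  by apply/ereal_infP => y [Q QIJ _]; case: none; exists Q.
have ffunK (f : V -> option E) : fun_of_fin [ffun v => f v] = f := funext (ffunE f).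
pose is_routing (f : {ffun V -> option E}) := `[< routing I J f >].
have routing0 : is_routing [ffun v => linking_route src I Q v].
  by apply/asboolP; rewrite ffunK; apply: routing_linking_route.
case: (arg_minP (fun f : {ffun V -> option E} => rweight J f) routing0) => f /asboolP fr f_min.
exists f => //; apply/eqP; rewrite eq_le min_linking_weight_le_routing //=.
apply/ereal_infP => _ [P PIJ <-]; rewrite lee_fin -(routing_weight_linking_route PIJ).
have := f_min [ffun v => linking_route src I P v]; rewrite ffunK; apply.
by apply/asboolP; rewrite ffunK; apply: routing_linking_route.
Qed.

Lemma min_linking_weight_gt_ninfty I J : mu I J != -oo.
Proof.
by case: (eqVneq (mu I J) +oo) => [->|/min_linking_weight_routing[f _ ->]].
Qed.

Lemma min_linking_weight_exchange J1 J2 (S T : {set 'I_n}) : J1 \subset J2 ->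
  min_twice_or_infty (T :\: S) (fun t => mu (t |: S) J1 + mu (T :\ t) J2).
Proof.
move=> J12; set F := fun t => _.
case: (boolP [exists t in T :\: S, F t != +oo]) => [|/existsPn none]; last first.
  by left=> t tTS; apply/eqP; have := none t; rewrite tTS negbK.
case/existsP => t0 /andP[t0TS Ft0]; right.
case: (arg_minP F t0TS) => t1 t1TS t1_min; have /setDP[t1T t1S] := t1TS.
have Ft1 : F t1 != +oo by apply: contra Ft0 => /eqP Foo; rewrite -leye_eq -Foo t1_min.
have [mu1_fin mu2_fin] : mu (t1 |: S) J1 != +oo /\ mu (T :\ t1) J2 != +oo.
  by split; apply: contra Ft1 => /eqP oo;
    rewrite /F oo ?addye ?addey ?min_linking_weight_gt_ninfty.
have [f1 r1 mu1E] := min_linking_weight_routing mu1_fin.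
have [f2 r2 mu2E] := min_linking_weight_routing mu2_fin.
have J21 : ~: J2 \subset ~: J1 by rewrite setCS.
have t1_in : iota t1 \in iota @: (t1 |: S) by rewrite imset_f ?setU11.
have t1_out : iota t1 \notin iota @: (T :\ t1) by rewrite mem_imset // setD11.
have [b [g1 [g2 [+ + g1r g2r wE]]]] := routing_exchange w J21 r1 r2 t1_in t1_out.
case/imsetP => t2 /setD1P[t21 t2T] bE; subst b.
rewrite mem_imset // in_setU1 negb_or => /andP[_ t2S].
rewrite imsetU1D1 // in g1r; rewrite imsetD1U1 1?eq_sym // in g2r.
have t2TS : t2 \in T :\: S by rewrite inE t2S.
exists t1, t2; split => //; first by rewrite eq_sym.
apply/eqP; rewrite eq_le t1_min //= /F mu1E mu2E -EFinD -wE EFinD.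
by apply: leeD; apply: min_linking_weight_le_routing.
Qed.

End MinLinkingWeight.

Theorem theorem7p1 (R : realType) (V E : finType) (src tgt : E -> V)
    (n : nat) (iota : 'I_n -> V) (w : E -> R) (s : nat) (S : 'I_s -> {set V}) :
  injective iota ->
  no_negative_cycle src tgt w ->
  (forall j k : 'I_s, (j < k)%N -> S j \subset S k) ->
  (forall j k : 'I_s, (j < k)%N -> (#|S j| < #|S k|)%N) ->
  (forall j : 'I_s, exists I : {set 'I_n}, has_linking src tgt iota I (S j)) ->
  valuated_flag_matroid (fun j : 'I_s => #|S j|)
    (fun j I => min_linking_weight src tgt w iota I (S j)).
Proof.
(* The ranks need not increase strictly: the exchange only uses S j \subset S k. *)
move=> iota_inj w_cycles S_sub _ S_linked.
have exchange := min_linking_weight_exchange iota_inj w_cycles.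
split=> [j|j k jk S' T' _ _]; last exact: exchange S' T' (S_sub j k jk).
split=> [|S' T' _ _]; last exact: exchange S' T' (subxx _).
have [I [P PIJ]] := S_linked j; exists I; split; first by case: PIJ.
by rewrite -ltey (le_lt_trans (min_linking_weight_le_linking w PIJ)) ?ltry.
Qed.
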